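(* Let $N$ be a finite set and $g\colon 2^N\to\mathbb{R}_{\ge0}$ a set function that is monotone ($g(R)\le g(Q)$ for $R\subseteq Q$) and supermodular ($g(R\cup\{x\})-g(R)\le g(Q\cup\{x\})-g(Q)$ for $R\subseteq Q\subseteq N$, $x\notin Q$). Define $v\colon 2^N\to\mathbb{R}$ by $$v(S)=g(S)+\sum_{j\in S}\big(g(S)-g(\{j\})\big).$$ Then $v$ is supermodular: $v(R\cup\{i\})-v(R)\le v(Q\cup\{i\})-v(Q)$ for all $R\subseteq Q\subseteq N$ and $i\notin Q$.
   Context: In the paper $g(S)=\mathcal{G}(V, f_S)$ is the performance (e.g. accuracy) on the common validation data $V$ of the model $f_S$ trained on the pooled training data of the parties in $S$; $v$ is the single-validation-task characteristic function. *)

From HB Require Import structures.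
From mathcomp Require Import all_boot all_order all_algebra.
Set Implicit Arguments. Unset Strict Implicit. Unset Printing Implicit Defensive.
Import Order.TTheory GRing.Theory Num.Theory.
Local Open Scope ring_scope.

Definition monotone_sf (R : realFieldType) (N : finType) (g : {set N} -> R) :=
  forall A B : {set N}, A \subset B -> g A <= g B.

Definition supermodular_sf (R : realFieldType) (N : finType) (g : {set N} -> R) :=
  forall (A B : {set N}) (x : N), A \subset B -> x \notin B ->
    g (x |: A) - g A <= g (x |: B) - g B.

Definition v_of (R : realFieldType) (N : finType) (g : {set N} -> R) (S : {set N}) : R :=
  g S + \sum_(j in S) (g S - g [set j]).

(* Expanding the sum gives v(S) = (|S|+1) g(S) - sum_{j in S} g({j}), so the
   marginal gain of v at x over A is (|A|+1)(g(x ∪ A) - g(A)) + g(x ∪ A) - g({x}).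
   From A to a superset B not containing x, the weight |A|+1 grows, the
   nonnegative marginal gain of g grows by supermodularity, and g(x ∪ A) grows
   by monotonicity; hence so does the marginal gain of v. *)
From HB Require Import structures.
From mathcomp Require Import all_boot all_order all_algebra.
From mathcomp Require Import ring.
Import Order.TTheory GRing.Theory Num.Theory.
Local Open Scope ring_scope.

Section MarginalGains.

Variables (R : realFieldType) (N : finType) (g : {set N} -> R).

Lemma v_ofE (S : {set N}) :
  v_of g S = (#|S|.+1)%:R * g S - \sum_(j in S) g [set j].
Proof. by rewrite /v_of sumrB sumr_const -mulr_natl mulrSr; ring. Qed.

Lemma v_of_setU1B (A : {set N}) (x : N) : x \notin A ->
  v_of g (x |: A) - v_of g A =
  (#|A|.+1)%:R * (g (x |: A) - g A) + (g (x |: A) - g [set x]).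
Proof.
by move=> xA; rewrite !v_ofE big_setU1 //= cardsU1 xA /= add1n mulrSr; ring.
Qed.

Lemma monotone_sf_setU1B_ge0 (A : {set N}) (x : N) :
  monotone_sf g -> 0 <= g (x |: A) - g A.
Proof. by move=> g_mono; rewrite subr_ge0 g_mono // subsetUr. Qed.

End MarginalGains.

Arguments monotone_sf_setU1B_ge0 {R N g}.

Theorem mainTheorem4 (R : realFieldType) (N : finType) (g : {set N} -> R)
  (g_nonneg : forall S : {set N}, 0 <= g S)
  (g_mono : monotone_sf g) (g_super : supermodular_sf g) :
  supermodular_sf (v_of g).
Proof.
move=> A B x AB xB.
have xA : x \notin A by apply: contra xB; apply: subsetP.
rewrite !v_of_setU1B //.
have weightAB : (#|A|.+1)%:R <= (#|B|.+1)%:R :> R.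
  by rewrite ler_nat ltnS subset_leq_card.
have gainAB := g_super A B x AB xB.
have gxAB : g (x |: A) <= g (x |: B) by rewrite g_mono // setUS.
apply: lerD; last by rewrite lerD2r.
apply: (le_trans (ler_wpM2r (monotone_sf_setU1B_ge0 A x g_mono) weightAB)).
by rewrite ler_wpM2l.
Qed.
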